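(* Let $N\ge 2$, let $D_1^N,\ldots,D_N^N:\mathbb{R}_+^N\to\mathbb{R}$ satisfy (A1)–(A3) below, and let the lower-level demand functions $D^n_i$ ($1\le n\le N-1$, $1\le i\le n$) be defined by the consistency recursion below and satisfy (A4). Then for each $n$ the functions $D_i^n$, $i=1,\ldots,n$, are smooth in all variables and satisfy $\partial D_i^n/\partial p_j>0$ for $j\ne i$; they inherit the exchangeability property (A2) (with $N$ replaced by $n$); and for every price vector $p$ with $p_1\le p_2\le\cdots\le p_N$ and every $1\le n\le N$, $$D_1^n(p_1,\ldots,p_n)\ge D_2^n(p_1,\ldots,p_n)\ge\cdots\ge D_n^n(p_1,\ldots,p_n).$$
   Context: (A1) Each $D_i^N$ is smooth, $D_N^N(0,\ldots,0)>0$, $\partial D_i^N/\partial p_i<0$, and $\partial D_i^N/\partial p_j>0$ for $j\ne i$. (A2) Exchangeability: $D_i^N(p_1,\ldots,p_i,\ldots,p_j,\ldots,p_N)=D_j^N(p_1,\ldots,p_j,\ldots,p_i,\ldots,p_N)$ for all $i,j$ (entries $i,j$ swapped), hence $D_i^N$ is invariant under permutations of the other firms' prices. (A3) For every $i$ and every vector of the other prices there is a finite choke price at which $D_i^N=0$. Consistency recursion: for $n=N-1,\ldots,1$, $D_i^n(p_1,\ldots,p_n)=D_i^{n+1}(p_1,\ldots,p_n,\hat p_{n+1})$ for $i\le n$, where $\hat p_{n+1}(p_1,\ldots,p_n)$ is the (finite) price with $D^{n+1}_{n+1}(p_1,\ldots,p_n,\hat p_{n+1})=0$. (A4) $\partial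 D^n_i/\partial p_i<0$ for all $n\le N-1$ and $i\le n$. *)

From HB Require Import structures.
From mathcomp Require Import all_boot all_order all_algebra.
From mathcomp Require Import reals.
Set Implicit Arguments. Unset Strict Implicit. Unset Printing Implicit Defensive.
Import Order.TTheory GRing.Theory Num.Theory.
Local Open Scope ring_scope.

Section Defs.
Variables (R : realType) (n : nat).

Definition nonneg (p : 'I_n -> R) : Prop := forall j, 0 <= p j.

Definition upd (p : 'I_n -> R) (j : 'I_n) (t : R) : 'I_n -> R :=
  fun k => if k == j then t else p k.

Definition swap (p : 'I_n -> R) (i j : 'I_n) : 'I_n -> R :=
  fun k => if k == i then p j else if k == j then p i else p k.

Definition cont_on (f : ('I_n -> R) -> R) : Prop :=
  forall p, nonneg p -> forall eps : R, 0 < eps ->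
    exists2 d : R, 0 < d & forall q, nonneg q ->
      (forall k, `|q k - p k| < d) -> `|f q - f p| < eps.

(* l is the partial derivative of f w.r.t. p_j at p, within R_+^n
   (two-sided if p_j > 0, right derivative if p_j = 0) *)
Definition has_pd_on (f : ('I_n -> R) -> R) (j : 'I_n) (p : 'I_n -> R) (l : R) : Prop :=
  forall eps : R, 0 < eps ->
    exists2 d : R, 0 < d & forall h : R, h != 0 -> `|h| < d -> 0 <= p j + h ->
      `|(f (upd p j (p j + h)) - f p) / h - l| < eps.

Fixpoint Ck_on (k : nat) (f : ('I_n -> R) -> R) : Prop :=
  cont_on f /\
  match k with
  | 0 => True
  | k'.+1 => exists df : 'I_n -> ('I_n -> R) -> R,
      (forall j p, nonneg p -> has_pd_on f j p (df j p)) /\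
      (forall j, Ck_on k' (df j))
  end.

Definition smooth_on (f : ('I_n -> R) -> R) : Prop := forall k, Ck_on k f.

Definition pd_neg (f : ('I_n -> R) -> R) (j : 'I_n) : Prop :=
  forall p, nonneg p -> exists l, has_pd_on f j p l /\ l < 0.
Definition pd_pos (f : ('I_n -> R) -> R) (j : 'I_n) : Prop :=
  forall p, nonneg p -> exists l, has_pd_on f j p l /\ 0 < l.

Definition exchangeable (D : 'I_n -> ('I_n -> R) -> R) : Prop :=
  forall (i j : 'I_n) p, nonneg p -> D i p = D j (swap p i j).

End Defs.

(* (p_1,...,p_n, h) : the vector p extended by a last entry h *)
Definition ext (R : realType) (n : nat) (p : 'I_n -> R) (h : R) : 'I_n.+1 -> R :=
  fun j => match unlift ord_max j with Some k => p k | None => h end.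

(* At level n the demands are D^{n+1}_i (p, h p), where the choke price h p is
   the zero of t |-> D^{n+1}_{n+1} (p, t), strictly decreasing by (A4).
   Implicit differentiation makes h as smooth as D^{n+1}, with
   d_j h = - d_j D^{n+1}_{n+1} / d_{n+1} D^{n+1}_{n+1} > 0, so by the chain rule
   d_j D^n_i = d_j D^{n+1}_i + d_{n+1} D^{n+1}_i * d_j h > 0.  Since h is
   determined by an exchangeable equation, it is symmetric, and exchangeability
   passes to level n; descending from N gives every level.  Finally, for
   p_i <= p_j, D_j (p) = D_i (p with p_i and p_j swapped), and going from p to
   the swapped vector raises p_i and lowers p_j, which both lower D_i (mean
   value theorem along coordinate lines). *)

From mathcomp Require Import all_boot all_order all_algebra.
From mathcomp Require Import boolp classical_sets functions reals topology normedtype derive.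
From mathcomp.algebra_tactics Require Import ring lra.
From mathcomp Require Import zify.
Import Order.TTheory GRing.Theory Num.Theory numFieldNormedType.Exports.
Local Open Scope ring_scope.
Local Open Scope classical_set_scope.

Section Coordinates.
Context {R : realType} {m : nat}.
Implicit Types (p z : 'I_m -> R).

Lemma upd_same z c u : upd z c u c = u.
Proof. by rewrite /upd eqxx. Qed.

Lemma upd_other z c u k : k != c -> upd z c u k = z k.
Proof. by rewrite /upd => /negbTE ->. Qed.

Lemma upd_upd z c u v : upd (upd z c u) c v = upd z c v.
Proof. by apply/funext => k; rewrite /upd; case: (k == c). Qed.

Lemma upd_id z c : upd z c (z c) = z.
Proof. by apply/funext => k; rewrite /upd; case: eqP => [->|]. Qed.

Lemma upd_nonneg {z} c {u} : nonneg z -> 0 <= u -> nonneg (upd z c u).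
Proof. by move=> hz hu k; rewrite /upd; case: (k == c). Qed.

Lemma swap_nonneg {z a b} : nonneg z -> nonneg (swap z a b).
Proof. by move=> hz k; rewrite /swap; case: (k == a); case: (k == b). Qed.

Lemma swap_swap_swap z a b c : a != b -> a != c -> b != c ->
  swap (swap (swap z c a) a b) b c = swap z a b.
Proof.
move=> ab ac bc; apply/funext => k; rewrite /swap.
have [ab' ba'] : (a == b) = false /\ (b == a) = false by rewrite (negbTE ab) eq_sym (negbTE ab).
have [ac' ca'] : (a == c) = false /\ (c == a) = false by rewrite (negbTE ac) eq_sym (negbTE ac).
have [bc' cb'] : (b == c) = false /\ (c == b) = false by rewrite (negbTE bc) eq_sym (negbTE bc).
have [E|ka] := eqVneq k a; first by subst k; rewrite ?eqxx ?ab' ?ba' ?ac' ?ca' ?bc' ?cb'.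
have [E|kb] := eqVneq k b; first by subst k; rewrite ?eqxx ?ab' ?ba' ?ac' ?ca' ?bc' ?cb'.
have [E|kc] := eqVneq k c; first by subst k; rewrite ?eqxx ?ab' ?ba' ?ac' ?ca' ?bc' ?cb'.
by rewrite ?(negbTE ka) ?(negbTE kb) ?(negbTE kc).
Qed.

Lemma exchangeable_swap_other {D : 'I_m -> ('I_m -> R) -> R} {a b c z} :
  exchangeable D -> nonneg z -> a != c -> b != c -> D c z = D c (swap z a b).
Proof.
move=> hD hz ac bc; have [<-|ab] := eqVneq a b.
  by congr (D c); apply/funext => k; rewrite /swap; case: eqP => [->|].
rewrite (hD c a z hz) (hD a b _ (swap_nonneg hz)).
by rewrite (hD b c _ (swap_nonneg (swap_nonneg hz))) swap_swap_swap.
Qed.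
End Coordinates.

Section Extension.
Context {R : realType} {n : nat}.
Implicit Types (p : 'I_n -> R).

Lemma ext_max p t : ext p t ord_max = t.
Proof. by rewrite /ext unlift_none. Qed.

Lemma ext_lift p t k : ext p t (lift ord_max k) = p k.
Proof. by rewrite /ext liftK. Qed.

Lemma ext_nonneg {p t} : nonneg p -> 0 <= t -> nonneg (ext p t).
Proof. by move=> hp ht k; case: (unliftP ord_max k) => [k'|] ->; rewrite ?ext_lift ?ext_max. Qed.

Lemma upd_ext_max p t s : upd (ext p t) ord_max s = ext p s.
Proof.
apply/funext => k; case: (unliftP ord_max k) => [k'|] ->; last by rewrite upd_same ext_max.
by rewrite upd_other ?ext_lift // eq_sym neq_lift.
Qed.

Lemma upd_ext_lift p t j s : upd (ext p t) (lift ord_max j) s = ext (upd p j s) t.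
Proof.
apply/funext => k; case: (unliftP ord_max k) => [k'|] ->.
  by rewrite /upd (inj_eq lift_inj) !ext_lift.
by rewrite upd_other ?ext_max // neq_lift.
Qed.

Lemma swap_ext p t i j : swap (ext p t) (lift ord_max i) (lift ord_max j) = ext (swap p i j) t.
Proof.
apply/funext => k; case: (unliftP ord_max k) => [k'|] ->.
  by rewrite /swap !(inj_eq lift_inj) !ext_lift.
by rewrite /swap !(negbTE (neq_lift _ _)) !ext_max.
Qed.
End Extension.

Section Filters.
Context {R : realType} {m : nat}.
Implicit Types (p q : 'I_m -> R) (f : ('I_m -> R) -> R).

Definition nonneg_nbhs p : set_system ('I_m -> R) :=
  filter_from [set d : R | 0 < d] (fun d => [set q | nonneg q /\ forall k, `|q k - p k| < d]).

Definition pd_nbhs p (j : 'I_m) : set_system R :=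
  filter_from [set d : R | 0 < d] (fun d => [set h | [/\ h != 0, `|h| < d & 0 <= p j + h]]).

Global Instance nonneg_nbhs_filter p : Filter (nonneg_nbhs p).
Proof.
apply: filter_from_filter; first by exists 1; rewrite /= ltr01.
move=> d d' /= hd hd'; exists (Num.min d d'); first by rewrite /= lt_min hd hd'.
by move=> q [hq hk]; split; split => // k; have := hk k; rewrite lt_min => /andP[].
Qed.

Global Instance pd_nbhs_filter p j : Filter (pd_nbhs p j).
Proof.
apply: filter_from_filter; first by exists 1; rewrite /= ltr01.
move=> d d' /= hd hd'; exists (Num.min d d'); first by rewrite /= lt_min hd hd'.
by move=> h [h0 hh hp]; move: hh; rewrite lt_min => /andP[].
Qed.

Lemma pd_nbhs_proper {p j} : 0 <= p j -> ProperFilter (pd_nbhs p j).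
Proof.
move=> hp; apply: filter_from_proper => d /= hd; exists (d / 2); split.
- by rewrite gt_eqF // divr_gt0.
- by rewrite gtr0_norm ?divr_gt0 //; lra.
- have : 0 < d / 2 by rewrite divr_gt0.
  lra.
Qed.

Lemma cont_onP f : cont_on f <-> forall p, nonneg p -> f @ nonneg_nbhs p --> f p.
Proof.
split=> hf p hp.
  apply/cvgrPdistC_lt => e he; have [d hd Hd] := hf p hp e he.
  by exists d => // q [hq hk]; exact: Hd.
move=> e he; have [d hd Hd] := (cvgrPdistC_lt _ _).1 (hf p hp) e he.
by exists d => // q hq hk; exact: (Hd q).
Qed.

Lemma has_pd_onP f j p l : has_pd_on f j p l <->
  (fun h => (f (upd p j (p j + h)) - f p) / h) @ pd_nbhs p j --> l.
Proof.
split=> hf.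
  apply/cvgrPdistC_lt => e he; have [d hd Hd] := hf e he.
  by exists d => // h [h0 hh hp]; exact: Hd.
move=> e he; have [d hd Hd] := (cvgrPdistC_lt _ _).1 hf e he.
by exists d => // h h0 hh hp; exact: (Hd h).
Qed.

Lemma near_nonneg_nbhs p : \forall q \near nonneg_nbhs p, nonneg q.
Proof. by exists 1 => //= q []. Qed.

Lemma pd_nbhs_upd_cvg {p j} : nonneg p ->
  (fun h => upd p j (p j + h)) @ pd_nbhs p j `=>` nonneg_nbhs p.
Proof.
move=> hp P [d /= hd sub]; exists d => // h [_ hh hpj] /=; apply: sub; split.
  exact: upd_nonneg.
by move=> k; rewrite /upd; case: eqP => [->|_]; rewrite ?subrr ?normr0 // addrC addKr.
Qed.

Lemma near_pd_nbhs_neq0 p j : \forall h \near pd_nbhs p j, h != 0.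
Proof. by exists 1 => //= h []. Qed.

Lemma near_pd_nbhs_step p j : nonneg p ->
  \forall h \near pd_nbhs p j, h != 0 /\ nonneg (upd p j (p j + h)).
Proof. by move=> hp; exists 1 => //= h [h0 _ hh]; split => //; exact: upd_nonneg. Qed.

Lemma pd_nbhs_cvg0 p j : (fun h => h) @ pd_nbhs p j --> (0 : R).
Proof.
by apply/cvgrPdistC_lt => e he; exists e => // h [_ hh _]; rewrite subr0.
Qed.

End Filters.

Section PartialDerivatives.
Context {R : realType} {m : nat}.
Implicit Types (p q : 'I_m -> R) (f : ('I_m -> R) -> R).

Lemma has_pd_uniq {f j p l l'} : nonneg p ->
  has_pd_on f j p l -> has_pd_on f j p l' -> l = l'.
Proof.
move=> hp /has_pd_onP hl /has_pd_onP hl'; have PF := pd_nbhs_proper (hp j).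
exact: cvg_unique hl hl'.
Qed.

Lemma pd_pos_has_pd {f j p l} : pd_pos f j -> nonneg p -> has_pd_on f j p l -> 0 < l.
Proof. by move=> hf hp hl; have [l' [hl' l0]] := hf p hp; rewrite (has_pd_uniq hp hl hl'). Qed.

Lemma pd_neg_has_pd {f j p l} : pd_neg f j -> nonneg p -> has_pd_on f j p l -> l < 0.
Proof. by move=> hf hp hl; have [l' [hl' l0]] := hf p hp; rewrite (has_pd_uniq hp hl hl'). Qed.

Lemma has_pd_cvg {f j p l} : has_pd_on f j p l ->
  (fun h => f (upd p j (p j + h))) @ pd_nbhs p j --> f p.
Proof.
move=> /has_pd_onP hl.
have E : {near pd_nbhs p j, (fun h => f p + h * ((f (upd p j (p j + h)) - f p) / h)) =1
                           (fun h => f (upd p j (p j + h)))}.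
  apply: filterS (near_pd_nbhs_neq0 p j) => h h0.
  by rewrite /= mulrC divfK // addrC subrK.
rewrite -[X in _ --> X]addr0 -(mul0r l).
apply: cvg_trans (near_eq_cvg E) _.
exact: cvgD (cvg_cst _) (cvgM (pd_nbhs_cvg0 p j) hl).
Qed.

Lemma has_pd_ext {f g j p l} : nonneg p -> (forall q, nonneg q -> f q = g q) ->
  has_pd_on f j p l -> has_pd_on g j p l.
Proof.
move=> hp efg /has_pd_onP hf; apply/has_pd_onP; apply: cvg_trans hf.
apply: near_eq_cvg; apply: filterS (near_pd_nbhs_step p j hp) => h [_ hh].
by rewrite /= !efg.
Qed.

Lemma has_pd_add {f g j p l l'} : has_pd_on f j p l -> has_pd_on g j p l' ->
  has_pd_on (fun q => f q + g q) j p (l + l').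
Proof.
move=> /has_pd_onP hf /has_pd_onP hg; apply/has_pd_onP.
rewrite (_ : (fun h => _) = (fun h => (f (upd p j (p j + h)) - f p) / h +
                                      (g (upd p j (p j + h)) - g p) / h)).
  exact: cvgD hf hg.
by apply/funext => h; ring.
Qed.

Lemma has_pd_opp {f j p l} : has_pd_on f j p l -> has_pd_on (fun q => - f q) j p (- l).
Proof.
move=> /has_pd_onP hf; apply/has_pd_onP.
rewrite (_ : (fun h => _) = (fun h => - ((f (upd p j (p j + h)) - f p) / h))).
  exact: cvgN hf.
by apply/funext => h; ring.
Qed.

Lemma has_pd_mul {f g j p l l'} : has_pd_on f j p l -> has_pd_on g j p l' ->
  has_pd_on (fun q => f q * g q) j p (l * g p + f p * l').
Proof.
move=> hf hg; have gc := has_pd_cvg hg.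
move/has_pd_onP: hf => hf; move/has_pd_onP: hg => hg; apply/has_pd_onP.
rewrite (_ : (fun h => _) =
    (fun h => (f (upd p j (p j + h)) - f p) / h * g (upd p j (p j + h)) +
              f p * ((g (upd p j (p j + h)) - g p) / h))).
  exact: cvgD (cvgM hf gc) (cvgM (cvg_cst _) hg).
by apply/funext => h; ring.
Qed.

Lemma has_pd_inv {f j p l} : nonneg p -> (forall q, nonneg q -> f q != 0) ->
  has_pd_on f j p l -> has_pd_on (fun q => (f q)^-1) j p (- l * ((f p)^-1 * (f p)^-1)).
Proof.
move=> hp f0 hf; have fc := has_pd_cvg hf; move/has_pd_onP: hf => hf; apply/has_pd_onP.
have E : {near pd_nbhs p j,
    (fun h => - ((f (upd p j (p j + h)) - f p) / h) * ((f (upd p j (p j + h)))^-1 * (f p)^-1)) =1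
    (fun h => ((f (upd p j (p j + h)))^-1 - (f p)^-1) / h)}.
  apply: filterS (near_pd_nbhs_step p j hp) => h [h0 hh] /=.
  by field; rewrite h0 !f0.
apply: cvg_trans (near_eq_cvg E) _.
exact: cvgM (cvgN hf) (cvgM (cvgV (f0 p hp) fc) (cvg_cst _)).
Qed.

Lemma cont_on_const c : cont_on (fun _ : 'I_m -> R => c).
Proof. by apply/cont_onP => p _; exact: cvg_cst. Qed.

Lemma cont_on_ext {f g} : (forall q, nonneg q -> f q = g q) -> cont_on f -> cont_on g.
Proof.
move=> efg /cont_onP hf; apply/cont_onP => p hp; rewrite -efg //.
apply: cvg_trans (hf p hp); apply: near_eq_cvg.
by exists 1 => //= q [hq _]; rewrite efg.
Qed.

Lemma cont_on_add {f g} : cont_on f -> cont_on g -> cont_on (fun q => f q + g q).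
Proof.
by move=> /cont_onP hf /cont_onP hg; apply/cont_onP => p hp; exact: cvgD (hf p hp) (hg p hp).
Qed.

Lemma cont_on_opp {f} : cont_on f -> cont_on (fun q => - f q).
Proof. by move=> /cont_onP hf; apply/cont_onP => p hp; exact: cvgN (hf p hp). Qed.

Lemma cont_on_mul {f g} : cont_on f -> cont_on g -> cont_on (fun q => f q * g q).
Proof.
by move=> /cont_onP hf /cont_onP hg; apply/cont_onP => p hp; exact: cvgM (hf p hp) (hg p hp).
Qed.

Lemma cont_on_inv {f} : (forall q, nonneg q -> f q != 0) -> cont_on f ->
  cont_on (fun q => (f q)^-1).
Proof. by move=> f0 /cont_onP hf; apply/cont_onP => p hp; exact: cvgV (f0 p hp) (hf p hp). Qed.
End PartialDerivatives.

Section SmoothClosure.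
Context {R : realType} {m : nat}.
Implicit Types (f g : ('I_m -> R) -> R).

Lemma Ck_on_cont {k f} : Ck_on k f -> cont_on f.
Proof. by case: k => [[]|k []]. Qed.

Lemma Ck_onW {k f} : Ck_on k.+1 f -> Ck_on k f.
Proof.
elim: k f => [|k IH] f [cf [df [pdf Hf]]]; first by split.
by split => //; exists df; split => // j; exact: IH.
Qed.

Lemma Ck_on_ext {k f g} : (forall q, nonneg q -> f q = g q) -> Ck_on k f -> Ck_on k g.
Proof.
case: k => [|k] efg [cf H]; (split; first exact: cont_on_ext efg cf) => //.
case: H => df [pdf Hf]; exists df; split => // j p hp.
exact: has_pd_ext hp efg (pdf j p hp).
Qed.

Lemma Ck_on_add {k f g} : Ck_on k f -> Ck_on k g -> Ck_on k (fun q => f q + g q).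
Proof.
elim: k f g => [|k IH] f g [cf Hf] [cg Hg]; (split; first exact: cont_on_add cf cg) => //.
case: Hf => df [pdf Hf]; case: Hg => dg [pdg Hg].
exists (fun j q => df j q + dg j q); split => [j p hp|j].
  exact: has_pd_add (pdf j p hp) (pdg j p hp).
exact: IH _ _ (Hf j) (Hg j).
Qed.

Lemma Ck_on_opp {k f} : Ck_on k f -> Ck_on k (fun q => - f q).
Proof.
elim: k f => [|k IH] f [cf Hf]; (split; first exact: cont_on_opp cf) => //.
case: Hf => df [pdf Hf]; exists (fun j q => - df j q); split => [j p hp|j].
  exact: has_pd_opp (pdf j p hp).
exact: IH _ (Hf j).
Qed.

Lemma Ck_on_mul {k f g} : Ck_on k f -> Ck_on k g -> Ck_on k (fun q => f q * g q).
Proof.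
elim: k f g => [|k IH] f g Cf Cg; have [cf Hf] := Cf; have [cg Hg] := Cg;
  (split; first exact: cont_on_mul cf cg) => //.
case: Hf => df [pdf Hf]; case: Hg => dg [pdg Hg].
exists (fun j q => df j q * g q + f q * dg j q); split => [j p hp|j].
  exact: has_pd_mul (pdf j p hp) (pdg j p hp).
exact: Ck_on_add (IH _ _ (Hf j) (Ck_onW Cg)) (IH _ _ (Ck_onW Cf) (Hg j)).
Qed.

Lemma Ck_on_inv {k f} : (forall q, nonneg q -> f q != 0) -> Ck_on k f ->
  Ck_on k (fun q => (f q)^-1).
Proof.
move=> f0; elim: k f f0 => [|k IH] f f0 Cf; have [cf Hf] := Cf;
  (split; first exact: cont_on_inv f0 cf) => //.
case: Hf => df [pdf Hf].
exists (fun j q => - df j q * ((f q)^-1 * (f q)^-1)); split => [j p hp|j].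
  exact: has_pd_inv hp f0 (pdf j p hp).
have Cfi := IH f f0 (Ck_onW Cf).
exact: Ck_on_mul (Ck_on_opp (Hf j)) (Ck_on_mul Cfi Cfi).
Qed.
End SmoothClosure.

Section CoordinateLines.
Context {R : realType} {m : nat}.
Implicit Types (p z : 'I_m -> R) (f : ('I_m -> R) -> R).

Lemma dnbhs0_le_pd_nbhs {p j} : 0 < p j -> (0 : R)^' `=>` pd_nbhs p j.
Proof.
move=> hp P [d /= hd sub]; near=> h.
have hh : `|h| < Num.min d (p j) by near: h; apply: dnbhs0_lt; rewrite lt_min hd hp.
move: hh; rewrite lt_min => /andP[hd' /ltr_normlP[hp' _]]; apply: sub; split => //.
- by near: h; exact: nbhs_dnbhs_neq.
- by lra.
Unshelve. all: by end_near.
Qed.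

Lemma has_pd_is_derive {f z c u l} : 0 < u -> has_pd_on f c (upd z c u) l ->
  is_derive u 1 (fun t => f (upd z c t)) l.
Proof.
move=> hu /has_pd_onP hl.
have hu' : 0 < upd z c u c by rewrite upd_same.
have hq := cvg_trans (cvg_app _ (dnbhs0_le_pd_nbhs hu')) hl.
have E : (fun h => (f (upd (upd z c u) c (upd z c u c + h)) - f (upd z c u)) / h) =
         (fun h : R => h^-1 *: (((fun t => f (upd z c t)) \o shift u) (h *: 1) - f (upd z c u))).
  by apply/funext => h; rewrite /= /shift upd_same upd_upd -[h%:A]/(h * 1) mulr1 (addrC h u) mulrC.
rewrite E in hq; apply: DeriveDef; first exact: cvgP hq.
exact: cvg_lim hq.
Qed.

Lemma at_right_within_nonneg {u : R} : 0 <= u -> u^'+ `=>` within [set t | 0 <= t] (nbhs u).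
Proof. by move=> hu; apply: within_subset => t /= ut; exact: le_trans hu (ltW ut). Qed.

Lemma nbhs_within_nonneg {u : R} : 0 < u -> nbhs u `=>` within [set t | 0 <= t] (nbhs u).
Proof.
move=> hu P hP; have {}hP : \forall t \near u, 0 <= t -> P t := hP.
by apply: filterS2 hP (lt_le_nbhsr hu) => t Pt /Pt.
Qed.

Lemma has_pd_cvg_within {f z c u l} : has_pd_on f c (upd z c u) l ->
  (fun t => f (upd z c t)) @ within [set t | 0 <= t] (nbhs u) --> f (upd z c u).
Proof.
move=> /has_pd_cvg /cvgrPdistC_lt hl; apply/cvgrPdistC_lt => e he.
have [d /= hd sub] := hl e he; near=> t.
have t0 : 0 <= t by near: t; exact: withinT.
have ut : `|t - u| < d.
  have ut1 : u - d < t by near: t; apply: cvg_within; apply: lt_nbhsr; lra.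
  have ut2 : t < u + d by near: t; apply: cvg_within; apply: lt_nbhsl; lra.
  by apply/ltr_normlP; split; lra.
have [->|tu] := eqVneq t u; first by rewrite subrr normr0.
have := sub (t - u); rewrite upd_same upd_upd (_ : u + (t - u) = t); last by ring.
by apply; split; rewrite ?subr_eq0 // (_ : u + (t - u) = t) //; ring.
Unshelve. all: by end_near.
Qed.

(* [P] is any property of the partial derivatives on the segment that the
   slope inherits. *)
Lemma has_pd_mvt {f z c a b} (P : R -> Prop) : 0 <= a -> a <= b ->
  (forall u, a <= u <= b -> exists2 l, has_pd_on f c (upd z c u) l & P l) ->
  exists2 l, P l & f (upd z c b) - f (upd z c a) = l * (b - a).
Proof.
move=> ha hab hd; have [eab|ltab] := eqVneq a b.
  have [|l _ hl] := hd a; first by rewrite lexx -eab lexx.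
  by exists l => //; rewrite eab !subrr mulr0.
have {}ltab : a < b by rewrite lt_neqAle ltab.
pose g t := f (upd z c t).
have hpd u : u \in `]a, b[%R -> 0 < u /\ exists2 l, has_pd_on f c (upd z c u) l & P l.
  by rewrite in_itv /= => /andP[au ub]; split; [lra | apply: hd; rewrite !ltW].
have dg u : u \in `]a, b[%R -> is_derive u 1 g ('D_1 g u).
  by move=> /hpd[u0 [l hl _]]; have D := has_pd_is_derive u0 hl; rewrite derive_val.
have cg : {within `[a, b], continuous g}.
  have [|la hla _] := hd a; first by rewrite lexx ltW.
  have [|lb hlb _] := hd b; first by rewrite lexx ltW.
  have b0 : 0 < b by lra.
  apply/continuous_within_itvP => //; split.
  - move=> u /hpd[u0 [l hl _]].
    exact: cvg_trans (cvg_app g (nbhs_within_nonneg u0)) (has_pd_cvg_within hl).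
  - exact: cvg_trans (cvg_app g (at_right_within_nonneg ha)) (has_pd_cvg_within hla).
  - apply: cvg_trans (has_pd_cvg_within hlb).
    exact: cvg_app g (cvg_trans (cvg_within _) (nbhs_within_nonneg b0)).
have [u /hpd[u0 [l hl Pl]] E] := MVT ltab dg cg.
by exists l => //; have D := has_pd_is_derive u0 hl; rewrite E derive_val.
Qed.

Lemma pd_neg_upd_ltr {f c z s t} : pd_neg f c -> nonneg z -> 0 <= s -> s < t ->
  f (upd z c t) < f (upd z c s).
Proof.
move=> hf hz s0 st; have [|l l0 E] := has_pd_mvt (f:=f) (z:=z) (c:=c) (fun l => l < 0) s0 (ltW st).
  by move=> u /andP[su _]; have [l []] := hf _ (upd_nonneg c hz (le_trans s0 su)); exists l.
by rewrite -subr_lt0 E pmulr_llt0 // subr_gt0.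
Qed.

Lemma pd_pos_upd_ltr {f c z s t} : pd_pos f c -> nonneg z -> 0 <= s -> s < t ->
  f (upd z c s) < f (upd z c t).
Proof.
move=> hf hz s0 st; have [|l l0 E] := has_pd_mvt (f:=f) (z:=z) (c:=c) (fun l => 0 < l) s0 (ltW st).
  by move=> u /andP[su _]; have [l []] := hf _ (upd_nonneg c hz (le_trans s0 su)); exists l.
by rewrite -subr_gt0 E pmulr_lgt0 // subr_gt0.
Qed.

Lemma pd_neg_upd_ler {f c z s t} : pd_neg f c -> nonneg z -> 0 <= s -> s <= t ->
  f (upd z c t) <= f (upd z c s).
Proof. by move=> hf hz s0; rewrite le_eqVlt => /predU1P[->//|st]; exact/ltW/pd_neg_upd_ltr. Qed.

Lemma pd_pos_upd_ler {f c z s t} : pd_pos f c -> nonneg z -> 0 <= s -> s <= t ->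
  f (upd z c s) <= f (upd z c t).
Proof. by move=> hf hz s0; rewrite le_eqVlt => /predU1P[->//|st]; exact/ltW/pd_pos_upd_ltr. Qed.

Lemma has_pd_line_approx f z c t L e : nonneg z -> 0 <= t ->
  (forall u, 0 <= u -> `|u - z c| <= `|t - z c| ->
     exists2 l, has_pd_on f c (upd z c u) l & `|l - L| <= e) ->
  `|f (upd z c t) - f z - L * (t - z c)| <= e * `|t - z c|.
Proof.
move=> hz ht hd; have hzc := hz c.
suff [l hl E] : exists2 l, `|l - L| <= e & f (upd z c t) - f z = l * (t - z c).
  by rewrite E -mulrBl normrM ler_wpM2r.
rewrite -{2}(upd_id z c); case: (lerP (z c) t) => hct.
  apply: has_pd_mvt => // u /andP[u1 u2]; apply: hd; first by lra.
  by rewrite !ger0_norm; lra.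
have [|l hl E] := has_pd_mvt (f:=f) (z:=z) (c:=c) (fun l => `|l - L| <= e) ht (ltW hct).
  move=> u /andP[u1 u2]; apply: hd; first by lra.
  by rewrite !ler0_norm; lra.
by exists l => //; apply/eqP; rewrite -opprB E -mulrN opprB.
Qed.

Lemma continuous_pd_approx2 {f x a b} {dA dB : ('I_m -> R) -> R} : a != b -> nonneg x ->
  (forall y, nonneg y -> has_pd_on f a y (dA y)) ->
  (forall y, nonneg y -> has_pd_on f b y (dB y)) ->
  cont_on dA -> cont_on dB ->
  forall e : R, 0 < e -> exists2 d : R, 0 < d & forall s t, 0 <= s -> 0 <= t ->
    `|s - x a| < d -> `|t - x b| < d ->
    `|f (upd (upd x b t) a s) - f x - dA x * (s - x a) - dB x * (t - x b)|
      <= e * (`|s - x a| + `|t - x b|).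
Proof.
move=> ab hx hA hB cA cB e he.
have [dA' hdA HA] := cA x hx e he; have [dB' hdB HB] := cB x hx e he.
exists (Num.min dA' dB'); first by rewrite lt_min hdA hdB.
move=> s t hs ht; rewrite !lt_min => /andP[hsA hsB] /andP[htA htB].
have dist_upd y c u d : `|u - y c| < d -> forall k, `|upd y c u k - y k| < d.
  move=> hu k; rewrite /upd; case: eqP => [->//|_].
  by rewrite subrr normr0; apply: le_lt_trans hu.
have xa : upd x b t a = x a by rewrite upd_other.
have Eb : `|f (upd x b t) - f x - dB x * (t - x b)| <= e * `|t - x b|.
  apply: has_pd_line_approx => // u hu hut.
  exists (dB (upd x b u)); first exact/hB/upd_nonneg.
  apply/ltW/HB; first exact: upd_nonneg.
  by apply: dist_upd; lra.
have Ea : `|f (upd (upd x b t) a s) - f (upd x b t) - dA x * (s - x a)| <= e * `|s - x a|.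
  rewrite -xa; apply: has_pd_line_approx => //; first exact: upd_nonneg.
  move=> u hu hus; have hy : nonneg (upd (upd x b t) a u).
    by apply: upd_nonneg => //; exact: upd_nonneg.
  exists (dA (upd (upd x b t) a u)); first exact: hA.
  apply/ltW/HA => // k; rewrite /upd; case: eqP => [->|_]; first by rewrite xa in hus; lra.
  by case: eqP => [->//|_]; rewrite subrr normr0.
set A := f (upd (upd x b t) a s) - f (upd x b t) - dA x * (s - x a) in Ea.
set B := f (upd x b t) - f x - dB x * (t - x b) in Eb.
have -> : f (upd (upd x b t) a s) - f x - dA x * (s - x a) - dB x * (t - x b) = A + B.
  by rewrite /A /B; ring.
by have := ler_normD A B; rewrite mulrDr; lra.
Qed.
End CoordinateLines.

Section Estimates.
Context {R : realType}.

Lemma implicit_quotient_estimate (A B D s e eps : R) : B != 0 -> s != 0 ->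
  `|A * s + B * D| <= e * (`|s| + `|D|) -> e <= `|B| / 2 ->
  e * (4 * (1 + `|- A / B|)) <= eps * `|B| -> 0 < eps ->
  `|D / s - - A / B| < eps.
Proof.
move=> hB hs H he1 he2 heps.
set r := D / s; set c := - A / B.
have hD : D = r * s by rewrite /r divfK.
have hb : 0 < `|B| by rewrite normr_gt0.
have hsn : 0 < `|s| by rewrite normr_gt0.
have H2 : `|B| * `|r - c| <= e * (1 + `|r|).
  have : `|A * s + B * D| = `|s| * (`|B| * `|r - c|).
    rewrite -!normrM; congr `|_|; rewrite hD /c; field; exact: hB.
  move=> he; rewrite he hD normrM in H.
  have : `|s| * (`|B| * `|r - c|) <= `|s| * (e * (1 + `|r|)).
    apply: le_trans H _; rewrite -(mulrC `|s|); lra.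
  by rewrite ler_pM2l.
have H3 : `|r| <= `|r - c| + `|c|.
  by have := ler_normD (r - c) c; rewrite subrK.
have e0 : 0 <= e.
  have : 0 <= e * (`|s| + `|D|) by apply: le_trans H.
  have : 0 < `|s| + `|D| by have := normr_ge0 D; lra.
  move=> h1 h2; by rewrite (pmulr_lge0 _ h1) in h2.
set X := `|r - c| in H2 H3 *; set C := `|c| in he2 H3 *; set b := `|B| in hb H2 he1 he2 *.
have hX : 0 <= X by rewrite /X.
have hC : 0 <= C by rewrite /C.
have h4 : e * X <= b / 2 * X by apply: ler_wpM2r.
have h5 : e * `|r| <= e * (X + C) by apply: ler_wpM2l.
have h6 : b * X <= 2 * e * (1 + C) by nra.
have h7 : b * X <= b * (eps / 2) by nra.
have : X <= eps / 2 by rewrite -(ler_pM2l hb).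
lra.
Qed.

Lemma remainder_quotient_estimate (N D s e c eps : R) : s != 0 -> 0 < eps ->
  `|N| <= e * (`|s| + `|D|) -> `|D / s - c| < 1 -> e * (2 * (2 + `|c|)) <= eps ->
  `|N / s| < eps.
Proof.
move=> hs heps H Hr He.
have hsn : 0 < `|s| by rewrite normr_gt0.
have hD : `|D| = `|D / s| * `|s| by rewrite -normrM divfK.
have hr : `|D / s| <= 1 + `|c|.
  have := ler_normD (D / s - c) c; rewrite subrK; lra.
have e0 : 0 <= e.
  have : 0 <= e * (`|s| + `|D|) by apply: le_trans H.
  have : 0 < `|s| + `|D| by have := normr_ge0 D; lra.
  move=> h1 h2; by rewrite (pmulr_lge0 _ h1) in h2.
have H2 : `|N| <= e * (2 + `|c|) * `|s|.
  apply: le_trans H _; rewrite hD.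
  set a := `|D / s| in hr *; set b := `|s| in hsn *.
  have : e * a * b <= e * (1 + `|c|) * b.
    by apply: ler_wpM2r; [lra | apply: ler_wpM2l].
  lra.
rewrite normrM normfV ltr_pdivrMr //.
apply: le_lt_trans H2 _.
have : 0 <= `|c| := normr_ge0 c.
nra.
Qed.
End Estimates.

Lemma cont_on_comp_ext {R : realType} {n : nat} {Phi : ('I_n.+1 -> R) -> R} {g : ('I_n -> R) -> R} :
  (forall q, nonneg q -> 0 <= g q) -> cont_on g -> cont_on Phi ->
  cont_on (fun q => Phi (ext q (g q))).
Proof.
move=> g0 cg cP p hp e he.
have [d hd Hd] := cP _ (ext_nonneg hp (g0 p hp)) e he.
have [d' hd' Hd'] := cg p hp d hd.
exists (Num.min d d'); first by rewrite lt_min hd hd'.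
move=> q hq hk; apply: Hd; first exact: ext_nonneg hq (g0 q hq).
move=> k; case: (unliftP ord_max k) => [k'|] ->; rewrite ?ext_lift ?ext_max.
  by have := hk k'; rewrite lt_min => /andP[].
by apply: Hd' => // k'; have := hk k'; rewrite lt_min => /andP[].
Qed.

Section ChokePrice.
Context {R : realType} {n : nat}.
Context {F : ('I_n.+1 -> R) -> R}.
Hypothesis F_decr : pd_neg F ord_max.
Implicit Types (p q : 'I_n -> R).

Lemma pd_neg_ext_ltr {p s t} : nonneg p -> 0 <= s -> s < t -> F (ext p t) < F (ext p s).
Proof.
move=> hp s0 st; rewrite -(upd_ext_max p 0 t) -(upd_ext_max p 0 s).
exact: pd_neg_upd_ltr F_decr (ext_nonneg hp (lexx 0)) s0 st.
Qed.

Lemma pd_neg_ext_ler {p s t} : nonneg p -> 0 <= s -> s <= t -> F (ext p t) <= F (ext p s).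
Proof.
move=> hp s0 st; rewrite -(upd_ext_max p 0 t) -(upd_ext_max p 0 s).
exact: pd_neg_upd_ler F_decr (ext_nonneg hp (lexx 0)) s0 st.
Qed.

Lemma pd_neg_ext_inj {p s t} : nonneg p -> 0 <= s -> 0 <= t -> F (ext p s) = F (ext p t) -> s = t.
Proof.
move=> hp s0 t0 E; case: (ltgtP s t) => // st.
  by have := pd_neg_ext_ltr hp s0 st; rewrite E ltxx.
by have := pd_neg_ext_ltr hp t0 st; rewrite E ltxx.
Qed.

Hypothesis F_cont : cont_on F.
Context {h : ('I_n -> R) -> R}.
Hypothesis h_ge0 : forall p, nonneg p -> 0 <= h p.
Hypothesis h_root : forall p, nonneg p -> F (ext p (h p)) = 0.

Lemma choke_cont : cont_on h.
Proof.
apply/cont_onP => p hp; apply/cvgrPdistC_lt => e he.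
have t0 := h_ge0 p hp.
have cF t : 0 <= t -> (fun q => F (ext q t)) @ nonneg_nbhs p --> F (ext p t).
  move=> ht; apply: (cont_onP _).1 hp.
  exact: cont_on_comp_ext (fun _ _ => ht) (cont_on_const t) F_cont.
have up : \forall q \near nonneg_nbhs p, h q < h p + e.
  have te : 0 <= h p + e by lra.
  have Fte : F (ext p (h p + e)) < 0 by rewrite -(h_root p hp) pd_neg_ext_ltr //; lra.
  have Fn : \forall q \near nonneg_nbhs p, F (ext q (h p + e)) < 0.
    exact: cvgr_lt _ (cF _ te) _ Fte.
  apply: filterS2 (near_nonneg_nbhs p) Fn => q hq Fq.
  rewrite ltNge; apply/negP => /(pd_neg_ext_ler hq te).
  by rewrite h_root //; lra.
have lo : \forall q \near nonneg_nbhs p, h p - e < h q.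
  case: (ltrP (h p - e) 0) => te.
    by apply: filterS (near_nonneg_nbhs p) => q hq; have := h_ge0 q hq; lra.
  have Fte : 0 < F (ext p (h p - e)) by rewrite -(h_root p hp) pd_neg_ext_ltr //; lra.
  have Fn : \forall q \near nonneg_nbhs p, 0 < F (ext q (h p - e)).
    exact: cvgr_gt _ (cF _ te) _ Fte.
  apply: filterS2 (near_nonneg_nbhs p) Fn => q hq Fq.
  rewrite ltNge; apply/negP => /(pd_neg_ext_ler hq (h_ge0 q hq)).
  by rewrite h_root //; lra.
by apply: filterS2 up lo => q h1 h2; apply/ltr_normlP; split; lra.
Qed.

Context {dF : 'I_n.+1 -> ('I_n.+1 -> R) -> R}.
Hypothesis F_pd : forall c y, nonneg y -> has_pd_on F c y (dF c y).
Hypothesis dF_cont : forall c, cont_on (dF c).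

Lemma dF_last_lt0 y : nonneg y -> dF ord_max y < 0.
Proof. by move=> hy; exact: pd_neg_has_pd F_decr hy (F_pd _ _ hy). Qed.

Lemma choke_near_cvg q j : nonneg q ->
  (fun s => h (upd q j (q j + s))) @ pd_nbhs q j --> h q.
Proof.
move=> hq; exact: cvg_trans (cvg_app h (pd_nbhs_upd_cvg hq)) ((cont_onP _).1 choke_cont q hq).
Qed.

Lemma near_choke_increment {Phi : ('I_n.+1 -> R) -> R} {dP : 'I_n.+1 -> ('I_n.+1 -> R) -> R}
    q j {e} :
  (forall c y, nonneg y -> has_pd_on Phi c y (dP c y)) -> (forall c, cont_on (dP c)) ->
  nonneg q -> 0 < e ->
  \forall s \near pd_nbhs q j,
    `|Phi (ext (upd q j (q j + s)) (h (upd q j (q j + s)))) - Phi (ext q (h q))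
      - dP (lift ord_max j) (ext q (h q)) * s
      - dP ord_max (ext q (h q)) * (h (upd q j (q j + s)) - h q)|
    <= e * (`|s| + `|h (upd q j (q j + s)) - h q|).
Proof.
move=> Phi_pd dP_cont hq he; have hy := ext_nonneg hq (h_ge0 q hq).
have jmax : lift ord_max j != ord_max by rewrite eq_sym neq_lift.
have [d hd Hd] := continuous_pd_approx2 jmax hy (Phi_pd _) (Phi_pd _) (dP_cont _) (dP_cont _) _ he.
near=> s.
have [_ hq'] : s != 0 /\ nonneg (upd q j (q j + s)) by near: s; exact: near_pd_nbhs_step.
have sd : `|s| < d by near: s; exists d => // s' [].
have hd' : `|h (upd q j (q j + s)) - h q| < d.
  by near: s; exact: cvgr_distC_lt (choke_near_cvg q j hq) _ hd.
have hqj : 0 <= q j + s by have := hq' j; rewrite upd_same.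
have := Hd (q j + s) _ hqj (h_ge0 _ hq').
rewrite ext_lift ext_max (_ : q j + s - q j = s); last by ring.
by move=> /(_ sd hd'); rewrite upd_ext_max upd_ext_lift.
Unshelve. all: by end_near.
Qed.

(* implicit differentiation of [F (p, h p) = 0] *)
Lemma choke_has_pd q j : nonneg q ->
  has_pd_on h j q (- dF (lift ord_max j) (ext q (h q)) / dF ord_max (ext q (h q))).
Proof.
move=> hq; apply/has_pd_onP/cvgrPdistC_lt => eps heps.
have hy := ext_nonneg hq (h_ge0 q hq).
set A := dF (lift ord_max j) _; set B := dF ord_max _.
have hB : B != 0 by rewrite lt_eqF // dF_last_lt0.
have hb : 0 < `|B| by rewrite normr_gt0.
set e := Num.min (`|B| / 2) (eps * `|B| / (4 * (1 + `|- A / B|))).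
have h4 : 0 < 4 * (1 + `|- A / B|) by have := normr_ge0 (- A / B); lra.
have he : 0 < e.
  by rewrite lt_min; apply/andP; split; [lra | apply: divr_gt0 => //; exact: mulr_gt0].
have he1 : e <= `|B| / 2 by rewrite ge_min lexx.
have he2 : e * (4 * (1 + `|- A / B|)) <= eps * `|B| by rewrite -ler_pdivlMr // ge_min lexx orbT.
apply: filterS2 (near_pd_nbhs_step q j hq) (near_choke_increment q j F_pd dF_cont hq he).
move=> s [s0 hq']; rewrite !h_root // -/A -/B.
rewrite (_ : 0 - 0 - A * s - _ = - (A * s + B * (h (upd q j (q j + s)) - h q))); last by ring.
by rewrite normrN => H; exact: implicit_quotient_estimate hB s0 H he1 he2 heps.
Qed.

Lemma choke_comp_remainder {Phi : ('I_n.+1 -> R) -> R} {dP : 'I_n.+1 -> ('I_n.+1 -> R) -> R} q j :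
  (forall c y, nonneg y -> has_pd_on Phi c y (dP c y)) -> (forall c, cont_on (dP c)) ->
  nonneg q ->
  (fun s => (Phi (ext (upd q j (q j + s)) (h (upd q j (q j + s)))) - Phi (ext q (h q))
      - dP (lift ord_max j) (ext q (h q)) * s
      - dP ord_max (ext q (h q)) * (h (upd q j (q j + s)) - h q)) / s) @ pd_nbhs q j --> 0.
Proof.
move=> Phi_pd dP_cont hq; apply/cvgrPdistC_lt => eps heps.
have /has_pd_onP hc := choke_has_pd q j hq.
set c := - dF _ _ / dF _ _ in hc.
have hK : 0 < 2 * (2 + `|c|) by have := normr_ge0 c; lra.
have he : 0 < eps / (2 * (2 + `|c|)) by apply: divr_gt0.
have He : eps / (2 * (2 + `|c|)) * (2 * (2 + `|c|)) <= eps by rewrite divfK ?gt_eqF.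
have hr : \forall s \near pd_nbhs q j, `|(h (upd q j (q j + s)) - h q) / s - c| < 1.
  exact: cvgr_distC_lt hc _ ltr01.
apply: filterS3 (near_pd_nbhs_step q j hq) (near_choke_increment q j Phi_pd dP_cont hq he) hr.
move=> s [s0 _] H {}hr; rewrite subr0.
exact: remainder_quotient_estimate s0 heps H hr He.
Qed.

Lemma choke_comp_has_pd (Phi : ('I_n.+1 -> R) -> R) (dP : 'I_n.+1 -> ('I_n.+1 -> R) -> R) q j :
  (forall c y, nonneg y -> has_pd_on Phi c y (dP c y)) -> (forall c, cont_on (dP c)) ->
  nonneg q ->
  has_pd_on (fun p => Phi (ext p (h p))) j q
    (dP (lift ord_max j) (ext q (h q)) + dP ord_max (ext q (h q)) *
      (- dF (lift ord_max j) (ext q (h q)) / dF ord_max (ext q (h q)))).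
Proof.
move=> Phi_pd dP_cont hq; apply/has_pd_onP.
have /has_pd_onP hc := choke_has_pd q j hq.
have E0 := choke_comp_remainder q j Phi_pd dP_cont hq.
rewrite -[X in _ --> X]addr0.
apply: cvg_trans (near_eq_cvg _) (cvgD (cvgD (cvg_cst _) (cvgM (cvg_cst _) hc)) E0).
by apply: filterS (near_pd_nbhs_neq0 q j) => s s0; rewrite !fctE /=; field.
Qed.
End ChokePrice.

Section ChokeSmooth.
Context {R : realType} {n : nat}.
Context {F : ('I_n.+1 -> R) -> R}.
Hypothesis F_decr : pd_neg F ord_max.
Hypothesis F_smooth : smooth_on F.
Context {h : ('I_n -> R) -> R}.
Hypothesis h_ge0 : forall p, nonneg p -> 0 <= h p.
Hypothesis h_root : forall p, nonneg p -> F (ext p (h p)) = 0.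

Let F_cont : cont_on F := Ck_on_cont (F_smooth 0).

Lemma Ck_on_choke_comp k Phi : Ck_on k Phi -> Ck_on k (fun p => Phi (ext p (h p))).
Proof.
elim: k Phi => [|k IH] Phi [cP HP].
  by split => //; exact: cont_on_comp_ext h_ge0 (choke_cont F_decr F_cont h_ge0 h_root) cP.
split; first exact: cont_on_comp_ext h_ge0 (choke_cont F_decr F_cont h_ge0 h_root) cP.
have [_ [dF [pdF HF]]] := F_smooth k.+1.
case: HP => dP [pdP HP].
exists (fun j p => dP (lift ord_max j) (ext p (h p)) + dP ord_max (ext p (h p)) *
      (- dF (lift ord_max j) (ext p (h p)) / dF ord_max (ext p (h p)))); split.
  move=> j q hq; apply: (choke_comp_has_pd F_decr F_cont h_ge0 h_root pdF) => //.
  - by move=> c; exact: Ck_on_cont (HF c).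
  - by move=> c; exact: Ck_on_cont (HP c).
move=> j; apply: (IH (fun y => dP (lift ord_max j) y +
  dP ord_max y * (- dF (lift ord_max j) y / dF ord_max y))).
apply: Ck_on_add (HP _) (Ck_on_mul (HP _) (Ck_on_mul (Ck_on_opp (HF _)) (Ck_on_inv _ (HF _)))).
by move=> y hy; rewrite lt_eqF // (dF_last_lt0 F_decr pdF _ hy).
Qed.
End ChokeSmooth.

Definition regular_demand {R : realType} {n : nat} (D : 'I_n -> ('I_n -> R) -> R) : Prop :=
  (forall i, smooth_on (D i)) /\ (forall i j, i != j -> pd_pos (D i) j) /\ exchangeable D.

Section LowerLevel.
Context {R : realType} {n : nat}.
Context {Dn : 'I_n -> ('I_n -> R) -> R} {Dm : 'I_n.+1 -> ('I_n.+1 -> R) -> R}.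
Context {h : ('I_n -> R) -> R}.
Hypothesis Dm_smooth : forall i, smooth_on (Dm i).
Hypothesis Dm_subst : forall i j, i != j -> pd_pos (Dm i) j.
Hypothesis Dm_exch : exchangeable Dm.
Hypothesis Dm_decr : pd_neg (Dm ord_max) ord_max.
Hypothesis h_ge0 : forall p, nonneg p -> 0 <= h p.
Hypothesis h_root : forall p, nonneg p -> Dm ord_max (ext p (h p)) = 0.
Hypothesis DnE : forall p, nonneg p -> forall i, Dn i p = Dm (lift ord_max i) (ext p (h p)).

Lemma lower_smooth i : smooth_on (Dn i).
Proof.
move=> k; apply: (Ck_on_ext (f := fun p => Dm (lift ord_max i) (ext p (h p)))).
  by move=> p hp; rewrite DnE.
exact: (Ck_on_choke_comp Dm_decr (Dm_smooth _) h_ge0 h_root k (Dm (lift ord_max i))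
  (Dm_smooth _ k)).
Qed.

(* the chain rule gives dP_j + dP_max * (- dF_j / dF_max), and all four
   partial derivatives have known signs *)
Lemma lower_subst i j : i != j -> pd_pos (Dn i) j.
Proof.
move=> ij p hp.
have [_ [dP [pdP HP]]] := Dm_smooth (lift ord_max i) 1%N.
have [_ [dF [pdF HF]]] := Dm_smooth ord_max 1%N.
have F_cont := Ck_on_cont (Dm_smooth ord_max 0).
have := choke_comp_has_pd Dm_decr F_cont h_ge0 h_root pdF (fun c => (HF c).1)
  _ _ p j pdP (fun c => (HP c).1) hp.
set y := ext p (h p) => Hc; have hy : nonneg y := ext_nonneg hp (h_ge0 p hp).
eexists; split; first by apply: (has_pd_ext hp _ Hc) => q hq; rewrite DnE.
have lj : lift ord_max i != lift ord_max j by rewrite (inj_eq lift_inj).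
have lm : lift ord_max i != ord_max by rewrite eq_sym neq_lift.
have mj : ord_max != lift ord_max j by rewrite neq_lift.
have := pd_pos_has_pd (Dm_subst _ _ lj) hy (pdP _ _ hy).
have := pd_pos_has_pd (Dm_subst _ _ lm) hy (pdP _ _ hy).
have := pd_pos_has_pd (Dm_subst _ _ mj) hy (pdF _ _ hy).
have := pd_neg_has_pd Dm_decr hy (pdF _ _ hy).
set a := dF ord_max y; set b := dF (lift ord_max j) y => a0 b0 Pm Pj.
have -> : - b / a = b / - a by rewrite invrN mulrN mulNr.
by apply: addr_gt0 => //; apply: mulr_gt0 => //; apply: divr_gt0; lra.
Qed.

Lemma lower_exchangeable : exchangeable Dn.
Proof.
move=> i j p hp; have hs : nonneg (swap p i j) := swap_nonneg hp.
have hy : nonneg (ext p (h p)) := ext_nonneg hp (h_ge0 p hp).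
rewrite !DnE //; have -> : h (swap p i j) = h p.
  apply: (pd_neg_ext_inj Dm_decr hs (h_ge0 _ hs) (h_ge0 _ hp)); rewrite h_root //.
  rewrite -swap_ext -(exchangeable_swap_other Dm_exch hy) ?h_root //;
    by rewrite eq_sym neq_lift.
by rewrite -swap_ext; exact: Dm_exch.
Qed.

Lemma lower_regular : regular_demand Dn.
Proof.
by split; [exact: lower_smooth | split; [exact: lower_subst | exact: lower_exchangeable]].
Qed.
End LowerLevel.

Lemma exchangeable_demand_le {R : realType} {m : nat} (D : 'I_m -> ('I_m -> R) -> R) q i j :
  exchangeable D -> (forall i j, i != j -> pd_pos (D i) j) -> (forall i, pd_neg (D i) i) ->
  nonneg q -> q i <= q j -> D j q <= D i q.
Proof.
move=> hD hpos hneg hq qij; have [->//|ij] := eqVneq i j.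
rewrite (hD j i q hq) (_ : swap q j i = upd (upd q i (q j)) j (q i)) //.
set z := upd q i (q j); have hz : nonneg z := upd_nonneg i hq (hq j).
have zj : z j = q j by rewrite /z upd_other // eq_sym.
apply: le_trans (pd_pos_upd_ler (hpos _ _ ij) hz (hq i) qij) _.
rewrite -zj upd_id -{1}(upd_id q i).
exact: pd_neg_upd_ler (hneg i) hq (hq i) qij.
Qed.

Lemma nonneg_choice {R : realType} {m : nat} {P : ('I_m -> R) -> R -> Prop} :
  (forall p, nonneg p -> exists t, P p t) ->
  exists h : ('I_m -> R) -> R, forall p, nonneg p -> P p (h p).
Proof.
move=> hP; have /choice[h hh] : forall p, exists t, nonneg p -> P p t.
  move=> p; have [/hP[t Pt]|np] := pselect (nonneg p); first by exists t.
  by exists 0 => /np.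
by exists h.
Qed.

Lemma nat_down_ind (P : nat -> Prop) (N : nat) :
  P N -> (forall n, (1 <= n < N)%N -> P n.+1 -> P n) -> forall n, (1 <= n <= N)%N -> P n.
Proof.
move=> PN IH; suff H k : (k < N)%N -> P (N - k)%N.
  by move=> n hn; rewrite -(subKn (_ : n <= N)%N); [apply: H |]; lia.
elim: k => [|k IHk] kN; first by rewrite subn0.
have E : (N - k = (N - k.+1).+1)%N by lia.
by apply: IH; [lia | rewrite -E; apply: IHk; lia].
Qed.

Theorem proposition2p3 (R : realType) (N : nat)
  (D : forall n : nat, 'I_n -> ('I_n -> R) -> R) :
  (2 <= N)%N ->
  (* (A1) *)
  (forall i : 'I_N, smooth_on (D N i)) ->
  (forall i : 'I_N, nat_of_ord i = N.-1 -> 0 < D N i (fun _ => 0)) ->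
  (forall i : 'I_N, pd_neg (D N i) i) ->
  (forall i j : 'I_N, i != j -> pd_pos (D N i) j) ->
  (* (A2) *)
  exchangeable (D N) ->
  (* (A3) *)
  (forall (i : 'I_N) (p : 'I_N -> R), nonneg p ->
     exists h : R, 0 <= h /\ D N i (upd p i h) = 0) ->
  (* consistency recursion: D^n(p) = D^{n+1}(p, hat p_{n+1}) with hat p_{n+1} the choke price *)
  (forall n : nat, (1 <= n < N)%N -> forall p : 'I_n -> R, nonneg p ->
     exists h : R, 0 <= h /\ D n.+1 ord_max (ext p h) = 0 /\
       forall i : 'I_n, D n i p = D n.+1 (lift ord_max i) (ext p h)) ->
  (* (A4) *)
  (forall n : nat, (1 <= n < N)%N -> forall i : 'I_n, pd_neg (D n i) i) ->
  (forall n : nat, (1 <= n <= N)%N ->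
     (forall i : 'I_n, smooth_on (D n i)) /\
     (forall i j : 'I_n, i != j -> pd_pos (D n i) j) /\
     exchangeable (D n)) /\
  (forall p : 'I_N -> R, nonneg p ->
     (forall i j : 'I_N, (i <= j)%N -> p i <= p j) ->
     forall (n : nat) (hn : (n <= N)%N), (1 <= n)%N ->
     forall i j : 'I_n, (i <= j)%N ->
       D n j (fun k => p (widen_ord hn k)) <= D n i (fun k => p (widen_ord hn k))).
Proof.
move=> _ smoothN _ negN substN exchN _ consistent negn.
have neg n : (1 <= n <= N)%N -> forall i : 'I_n, pd_neg (D n i) i.
  move=> /andP[n1]; rewrite leq_eqVlt => /predU1P[->//|nN].
  by apply: negn; rewrite n1.
have reg : forall n, (1 <= n <= N)%N -> regular_demand (D n).
  apply: nat_down_ind => [|n hn [sm [sub ex]]]; first by split; [|split].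
  have [h hh] := nonneg_choice (consistent n hn).
  have hn1 : (1 <= n.+1 <= N)%N by case/andP: hn => _ ->.
  by apply: (lower_regular (h := h) sm sub ex (neg n.+1 hn1 ord_max)) => p hp;
    have [? [? ?]] := hh p hp.
split => [n hn|p hp pmono n nN n1 i j ij]; first exact: reg.
have [_ [sub ex]] : regular_demand (D n) by apply: reg; rewrite n1 nN.
apply: exchangeable_demand_le => //; last exact: pmono.
by apply: neg; rewrite n1 nN.
Qed.
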